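(* For every $j\in\mathbb Z$: (1) Every nontrivial coset of $\Phi^{j-1}_*\mathcal R$ is contained in $\{(x,y)\in\mathbb R^2: x\in m^{-j}\mathbb Z\setminus m^{-(j-1)}\mathbb Z\}$, and any two points of the same coset lie in a vertical edge path of $Y_j$ of combinatorial length at most $2$. (2) Every coset of $\mathcal R_j$ is contained in an orbit of the translation action of $m^{-j}\mathbb Z\times m_v^{-j}\mathbb Z$ on $\mathbb R^2$. (3) Let $\bar{\mathcal R}_{j+1}$ be the equivalence relation on $X_j$ generated by the pushforward $(\hat\pi^j\circ\Phi^j)_*\mathcal R$. Then the cosets of $\bar{\mathcal R}_{j+1}$ are exactly the fibers of $\pi_j:X_j\to X_{j+1}$. (4) For $i=0,1$ let $\hat\sigma_i$ be a cell of $Y_j$ and $\hat p_i$ an interior point of $\hat\sigma_i$. If $\hat p_0\sim_{\mathcal R_j}\hat p_1$, then there is a translation $t\in m^{-j}\mathbb Z\times m_v^{-j}\mathbb Z$ with $t(\hat\sigma_0)=\hat\sigma_1$ and $\hat q\sim_{\mathcal R_j}t(\hat q)$ for all $\hat q\in\hat\sigma_0$.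
   Context: Standing construction ($n=2$). Fix an integer $L\ge100$, $m=4$, $m_v=3L$. For $j\in\mathbb Z$, $Y_j$ is the cell complex on $\mathbb R^2$ given by the tiling by rectangles $[am^{-j},(a+1)m^{-j}]\times[bm_v^{-j},(b+1)m_v^{-j}]$, $a,b\in\mathbb Z$; a $1$-cell of $Y_j$ is horizontal if it is a translate of $[0,m^{-j}]\times\{0\}$ and vertical if it is a translate of $\{0\}\times[0,m_v^{-j}]$. Let $\Phi(x,y)=(m^{-1}x,m_v^{-1}y)$. For $k,\ell\in\mathbb Z$, $i\in\{1,2,3\}$, let $a_{k,\ell,i}=\{k+\tfrac i4\}\times[(3\ell+i-1)m_v^{-1},(3\ell+i)m_v^{-1}]$. $\mathcal R$ is the equivalence relation on $\mathbb R^2$ generated by $p\sim p+(0,m_v^{-1})$ for $p\in a_{k,\ell,i}$ (all $k,\ell,i$). For $j\in\mathbb Z$, $\Phi^j_*\mathcal R=\{(\Phi^jp,\Phi^jq):(p,q)\in\mathcal R\}$; $\mathcal R_j$ is the equivalence relation generated by $\Phi^i_*\mathcal R$ for all integers $i<j$, and $\mathcal R_\infty$ the one generated by all $\Phi^i_*\mathcal R$, $i\in\mathbb Z$. For $j\in\mathbb Z\cup\{\infty\}$, $X_j=\mathbb R^2/\mathcal R_j$ with the quotient topology, $\hat\pi^j:\mathbb R^2\to X_j$ the quotient map; for $i\le j$, $\pi_i^j:X_i\to X_j$ is the induced map, and $\pi_j=\pi_j^{j+1}$. *)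

From Stdlib Require Import Reals Lra Lia ZArith Relations.
Open Scope R_scope.

Definition pt := (R * R)%type.

(* m = 4, m_v = 3L *)
Definition mh : R := 4.
Definition mv (L : nat) : R := 3 * INR L.

Definition sh (j : Z) : R := powerRZ mh (- j).
Definition sv (L : nat) (j : Z) : R := powerRZ (mv L) (- j).

Definition Phi (L : nat) (j : Z) (p : pt) : pt := (sh j * fst p, sv L j * snd p).

Definition in_a (L : nat) (k l i : Z) (p : pt) : Prop :=
  fst p = IZR k + IZR i / 4 /\
  IZR (3 * l + i - 1) / mv L <= snd p <= IZR (3 * l + i) / mv L.

Definition gen0 (L : nat) (p q : pt) : Prop :=
  exists k l i : Z, (1 <= i <= 3)%Z /\ in_a L k l i p /\
    q = (fst p, snd p + / mv L).

Definition Rel (L : nat) : relation pt := clos_refl_sym_trans pt (gen0 L).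

Definition PhiRel (L : nat) (j : Z) (p q : pt) : Prop :=
  exists p0 q0, Rel L p0 q0 /\ p = Phi L j p0 /\ q = Phi L j q0.

Definition Rj (L : nat) (j : Z) : relation pt :=
  clos_refl_sym_trans pt (fun p q => exists i : Z, (i < j)%Z /\ PhiRel L i p q).

(* X_j = R^2 / R_j ; points of X_j are represented as the R_j-classes
   (predicates on R^2); hat pi^j sends p to its class. *)
Definition Xpt := pt -> Prop.
Definition pihat (L : nat) (j : Z) (p : pt) : Xpt := fun q => Rj L j p q.

(* the induced map pi_j : X_j -> X_{j+1} : a class is sent to the
   R_{j+1}-saturation of it (which is the R_{j+1}-class of any representative) *)
Definition pi (L : nat) (j : Z) (S : Xpt) : Xpt :=
  fun q => exists p, S p /\ Rj L (j + 1) p q.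

Definition Rbar (L : nat) (j : Z) : relation Xpt :=
  clos_refl_sym_trans Xpt (fun x y => exists p q, Rel L p q /\
      x = pihat L j (Phi L j p) /\ y = pihat L j (Phi L j q)).

Inductive ckind := C0 | CH | CV | C2.
Record cell := mkCell { ck : ckind; ca : Z; cb : Z }.

Definition in_cell (L : nat) (j : Z) (s : cell) (p : pt) : Prop :=
  let u := sh j in let v := sv L j in
  let x := fst p in let y := snd p in
  let a := IZR (ca s) in let b := IZR (cb s) in
  match ck s with
  | C0 => x = a * u /\ y = b * v
  | CH => a * u <= x <= (a + 1) * u /\ y = b * v
  | CV => x = a * u /\ b * v <= y <= (b + 1) * v
  | C2 => a * u <= x <= (a + 1) * u /\ b * v <= y <= (b + 1) * v
  end.

(* interior points (relative interior; a 0-cell is its own interior) *)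
Definition in_cell_interior (L : nat) (j : Z) (s : cell) (p : pt) : Prop :=
  let u := sh j in let v := sv L j in
  let x := fst p in let y := snd p in
  let a := IZR (ca s) in let b := IZR (cb s) in
  match ck s with
  | C0 => x = a * u /\ y = b * v
  | CH => a * u < x < (a + 1) * u /\ y = b * v
  | CV => x = a * u /\ b * v < y < (b + 1) * v
  | C2 => a * u < x < (a + 1) * u /\ b * v < y < (b + 1) * v
  end.

Definition translate (t p : pt) : pt := (fst p + fst t, snd p + snd t).

(* A vertical edge path of Y_j of combinatorial length n: vertices
   (a m^{-j}, f k m_v^{-j}), k = 0..n, consecutive ones joined by a vertical
   1-cell (|f (k+1) - f k| = 1). *)
Definition vpath (f : nat -> Z) (n : nat) : Prop :=
  forall k : nat, (k < n)%nat -> Z.abs (f (S k) - f k) = 1%Z.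

Definition on_vpath (L : nat) (j : Z) (a : Z) (f : nat -> Z) (n : nat) (p : pt) : Prop :=
  (exists k : nat, (k <= n)%nat /\ in_cell L j (mkCell C0 a (f k)) p) \/
  (exists k : nat, (k < n)%nat /\ in_cell L j (mkCell CV a (Z.min (f k) (f (S k)))) p).

Definition x_cond (j : Z) (x : R) : Prop :=
  (exists a : Z, x = IZR a * sh j) /\ ~ (exists b : Z, x = IZR b * sh (j - 1)).

(* A generator of R identifies a segment a_{k,l,i} with its translate by (0, 1/m_v), so a
   nontrivial R-coset lies in a vertical segment of height 2/m_v on the line x = k + i/4, and
   two points of such a segment are R-equivalent exactly when their heights differ by a
   multiple of 1/m_v. For i < j, Phi^i maps these segments onto vertical lines of Y_j, moves
   heights by multiples of m_v^{-j}, and sends the endpoints of both halves of a segment to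
   vertices of Y_j. Hence R_j only slides points along vertical grid lines of Y_j, and a
   vertical edge of Y_j through an interior point of such a half lies inside that half, so the
   whole edge is carried along by the same translation; this gives (2) and (4). Part (3) is
   formal, since R_{j+1} is generated by R_j together with Phi^j_* R. *)

From Stdlib Require Import Reals Lra Lia ZArith Relations.
From Stdlib Require Import FunctionalExtensionality PropExtensionality.
Open Scope R_scope.

Lemma IZR_pow_powerRZ (z k : Z) : (0 <= k)%Z -> IZR (z ^ k) = powerRZ (IZR z) k.
Proof.
  intros Hk. rewrite <- (Z2Nat.id k Hk), <- pow_IZR, pow_powerRZ. reflexivity.
Qed.

Lemma powerRZ_opp_le (z i j : Z) : IZR z <> 0 -> (i <= j)%Z ->
  powerRZ (IZR z) (- i) = IZR (z ^ (j - i)) * powerRZ (IZR z) (- j).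
Proof.
  intros Hz Hij. rewrite IZR_pow_powerRZ, <- powerRZ_add by (auto || lia).
  f_equal. lia.
Qed.

Lemma IZR_pos_lt_mult (u : R) (a b : Z) : 0 < u -> IZR a * u < IZR b * u -> (a < b)%Z.
Proof. intros Hu H. apply lt_IZR, Rmult_lt_reg_r with u; auto. Qed.

Lemma Rdiv_le_mult_iff (m a y : R) : 0 < m -> (a / m <= y <-> a <= m * y).
Proof.
  intros Hm. split; intros H.
  - apply Rmult_le_compat_l with (r := m) in H; [|lra].
    replace (m * (a / m)) with a in H by (field; lra). exact H.
  - apply Rmult_le_reg_l with m; [exact Hm|]. replace (m * (a / m)) with a by (field; lra). exact H.
Qed.

Lemma Rle_div_mult_iff (m a y : R) : 0 < m -> (y <= a / m <-> m * y <= a).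
Proof.
  intros Hm. split; intros H.
  - apply Rmult_le_compat_l with (r := m) in H; [|lra].
    replace (m * (a / m)) with a in H by (field; lra). exact H.
  - apply Rmult_le_reg_l with m; [exact Hm|]. replace (m * (a / m)) with a by (field; lra). exact H.
Qed.

Lemma pt_eq (p q : pt) : fst p = fst q -> snd p = snd q -> p = q.
Proof. destruct p, q; simpl; intros -> ->; reflexivity. Qed.

Lemma sh_pos j : 0 < sh j.
Proof. unfold sh, mh. apply powerRZ_lt. lra. Qed.

Lemma sh_le i j : (i <= j)%Z -> sh i = IZR (4 ^ (j - i)) * sh j.
Proof. intros Hij. apply powerRZ_opp_le; [discrR | exact Hij]. Qed.

Lemma sh_pred j : sh (j - 1) = 4 * sh j.
Proof. rewrite (sh_le _ j) by lia. replace (j - (j - 1))%Z with 1%Z by lia. reflexivity. Qed.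

Section Scales.

Variable L : nat.
Hypothesis HL : (1 <= L)%nat.

Lemma mv_IZR : mv L = IZR (3 * Z.of_nat L).
Proof. unfold mv. rewrite mult_IZR, <- INR_IZR_INZ. reflexivity. Qed.

Lemma mv_pos : 0 < mv L.
Proof. unfold mv. apply lt_0_INR in HL. lra. Qed.

Lemma sv_pos j : 0 < sv L j.
Proof. apply powerRZ_lt, mv_pos. Qed.

Lemma sv_le i j : (i <= j)%Z -> sv L i = IZR ((3 * Z.of_nat L) ^ (j - i)) * sv L j.
Proof.
  intros Hij. pose proof mv_pos. unfold sv. rewrite mv_IZR in *.
  apply powerRZ_opp_le; [lra | exact Hij].
Qed.

Lemma sv_pred j : sv L (j - 1) = mv L * sv L j.
Proof.
  rewrite (sv_le _ j), mv_IZR by lia. replace (j - (j - 1))%Z with 1%Z by lia.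
  rewrite Z.pow_1_r. reflexivity.
Qed.

End Scales.

(* a_{k,l,i} together with its translate by (0, 1/m_v) *)
Definition a_block (L : nat) (k l i : Z) (p : pt) : Prop :=
  fst p = IZR k + IZR i / 4 /\
  IZR (3 * l + i - 1) <= mv L * snd p <= IZR (3 * l + i - 1) + 2.

Definition same_block (L : nat) (p q : pt) : Prop :=
  exists k l i : Z, (1 <= i <= 3)%Z /\ a_block L k l i p /\ a_block L k l i q /\
    exists d : Z, mv L * snd q = mv L * snd p + IZR d.

Lemma a_block_unique L k l i k' l' i' p :
  (1 <= i <= 3)%Z -> (1 <= i' <= 3)%Z ->
  a_block L k l i p -> a_block L k' l' i' p -> k = k' /\ l = l' /\ i = i'.
Proof.
  intros Hi Hi' [Hx HY] [Hx' HY'].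
  assert (E : IZR (4 * k + i) = IZR (4 * k' + i')).
  { rewrite !plus_IZR, !mult_IZR. lra. }
  apply eq_IZR in E. assert (k = k' /\ i = i') as [-> ->] by lia.
  assert (A1 : IZR (3 * l + i' - 1) < IZR (3 * l' + i' - 1 + 3)) by (rewrite plus_IZR; lra).
  assert (A2 : IZR (3 * l' + i' - 1) < IZR (3 * l + i' - 1 + 3)) by (rewrite plus_IZR; lra).
  apply lt_IZR in A1, A2. lia.
Qed.

Section Blocks.

Variable L : nat.
Hypothesis HL : (1 <= L)%nat.

Lemma mv_mul_shift y t : mv L * (y + t / mv L) = mv L * y + t.
Proof. pose proof (mv_pos L HL). field. lra. Qed.

Lemma in_a_half_block k l i p : in_a L k l i p <->
  fst p = IZR k + IZR i / 4 /\
  IZR (3 * l + i - 1) <= mv L * snd p <= IZR (3 * l + i - 1) + 1.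
Proof.
  pose proof (mv_pos L HL). unfold in_a.
  replace (IZR (3 * l + i)) with (IZR (3 * l + i - 1) + 1)
    by (rewrite <- plus_IZR; f_equal; lia).
  rewrite Rdiv_le_mult_iff, Rle_div_mult_iff by lra. tauto.
Qed.

Lemma gen0_of_half_block k l i p :
  (1 <= i <= 3)%Z -> fst p = IZR k + IZR i / 4 ->
  IZR (3 * l + i - 1) <= mv L * snd p <= IZR (3 * l + i - 1) + 1 ->
  gen0 L p (fst p, snd p + / mv L).
Proof.
  intros Hi Hx HY. exists k, l, i.
  split; [exact Hi|]. split; [apply in_a_half_block; auto | reflexivity].
Qed.

Lemma gen0_same_block p q : gen0 L p q -> same_block L p q.
Proof.
  intros (k & l & i & Hi & Ha & ->). apply in_a_half_block in Ha as [Hx HY].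
  exists k, l, i. split; [exact Hi|].
  replace (snd p + / mv L) with (snd p + 1 / mv L) by (unfold Rdiv; ring).
  unfold a_block; cbn [fst snd]; rewrite mv_mul_shift.
  split; [split; [exact Hx | lra]|]. split; [split; [exact Hx | lra]|].
  exists 1%Z. reflexivity.
Qed.

Lemma Rel_same_block p q : Rel L p q -> p = q \/ same_block L p q.
Proof.
  induction 1 as [p q H | p | p q _ IH | p q r _ IH1 _ IH2].
  - right. apply gen0_same_block, H.
  - left. reflexivity.
  - destruct IH as [-> | (k & l & i & Hi & Hp & Hq & d & Hd)]; [left; reflexivity|].
    right. exists k, l, i. do 3 (split; [assumption|]). exists (- d)%Z.
    rewrite opp_IZR. lra.
  - destruct IH1 as [-> | B1]; [exact IH2|].
    destruct IH2 as [<- | B2]; [right; exact B1|].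
    destruct B1 as (k & l & i & Hi & Hp & Hq & d & Hd).
    destruct B2 as (k' & l' & i' & Hi' & Hq' & Hr & d' & Hd').
    destruct (a_block_unique L k l i k' l' i' q) as (<- & <- & <-); auto.
    right. exists k, l, i. do 3 (split; [assumption|]). exists (d + d')%Z.
    rewrite plus_IZR. lra.
Qed.

Lemma Rel_stairs k l i p (n : nat) : (1 <= i <= 3)%Z ->
  a_block L k l i p -> a_block L k l i (fst p, snd p + INR n / mv L) ->
  Rel L p (fst p, snd p + INR n / mv L).
Proof.
  intros Hi Hp. unfold a_block; cbn [fst snd]; rewrite mv_mul_shift.
  induction n as [|n IH]; intros [_ Hn].
  - replace (fst p, snd p + INR 0 / mv L) with p
      by (apply pt_eq; cbn; unfold Rdiv; ring).
    apply rst_refl.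
  - pose proof (pos_INR n). rewrite S_INR in Hn. destruct Hp as [Hx HY].
    eapply rst_trans; [apply IH; split; [exact Hx | lra]|].
    replace (fst p, snd p + INR (S n) / mv L) with
      (fst (fst p, snd p + INR n / mv L), snd (fst p, snd p + INR n / mv L) + / mv L)
      by (apply pt_eq; cbn [fst snd]; [reflexivity | rewrite S_INR; unfold Rdiv; ring]).
    apply rst_step. apply (gen0_of_half_block k l i); cbn [fst snd]; auto.
    rewrite mv_mul_shift. lra.
Qed.

Lemma a_block_snd_shift k l i p q (d : Z) :
  a_block L k l i p -> a_block L k l i q -> mv L * snd q = mv L * snd p + IZR d ->
  q = (fst p, snd p + IZR d / mv L).
Proof.
  intros [Hp _] [Hq _] Hd. pose proof (mv_pos L HL).
  apply pt_eq; cbn [fst snd]; [lra|].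
  apply Rmult_eq_reg_l with (mv L); [|lra]. rewrite mv_mul_shift. exact Hd.
Qed.

Lemma same_block_Rel p q : same_block L p q -> Rel L p q.
Proof.
  intros (k & l & i & Hi & Hp & Hq & d & Hd).
  destruct (Z_le_gt_dec 0 d) as [Hd0 | Hd0].
  - rewrite (a_block_snd_shift k l i p q d) in Hq |- * by assumption.
    rewrite <- (Z2Nat.id d Hd0), <- INR_IZR_INZ in Hq |- *.
    apply Rel_stairs with k l i; assumption.
  - assert (Hd' : mv L * snd p = mv L * snd q + IZR (- d)) by (rewrite opp_IZR; lra).
    apply rst_sym. rewrite (a_block_snd_shift k l i q p (- d)) in Hp |- * by assumption.
    rewrite <- (Z2Nat.id (- d)) , <- INR_IZR_INZ in Hp |- * by lia.
    apply Rel_stairs with k l i; assumption.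
Qed.

End Blocks.

Definition Gj (L : nat) (j : Z) (p q : pt) : Prop := exists i : Z, (i < j)%Z /\ PhiRel L i p q.

Definition vshift (L : nat) (j B : Z) (p : pt) : pt := (fst p, snd p + IZR B * sv L j).

Definition vslide (L : nat) (j : Z) (p q : pt) : Prop :=
  (exists B : Z, q = vshift L j B p) /\ (q = p \/ exists a : Z, fst p = IZR a * sh j).

Lemma vshift_0 L j p : vshift L j 0 p = p.
Proof. apply pt_eq; cbn; ring. Qed.

Lemma vshift_add L j B B' p : vshift L j B' (vshift L j B p) = vshift L j (B + B') p.
Proof. apply pt_eq; cbn [vshift fst snd]; [reflexivity | rewrite plus_IZR; ring]. Qed.

Lemma Gj_sym L j p q : Gj L j q p -> Gj L j p q.
Proof.
  intros (i & Hi & p0 & q0 & HR & -> & ->). exists i. split; [exact Hi|].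
  exists q0, p0. split; [apply rst_sym, HR | split; reflexivity].
Qed.

Lemma sh_lt i j : (i < j)%Z -> sh i = IZR (4 ^ (j - 1 - i)) * (4 * sh j).
Proof. intros Hij. rewrite (sh_le i (j - 1)), sh_pred by lia. reflexivity. Qed.

Section Slides.

Variable L : nat.
Hypothesis HL : (1 <= L)%nat.

Lemma sv_lt i j : (i < j)%Z ->
  sv L i = IZR ((3 * Z.of_nat L) ^ (j - 1 - i)) * (mv L * sv L j).
Proof. intros Hij. rewrite (sv_le L HL i (j - 1)), sv_pred by (auto || lia). reflexivity. Qed.

Lemma Phi_a_block_fst i j k l i' p : (i < j)%Z -> a_block L k l i' p ->
  fst (Phi L i p) = IZR (4 ^ (j - 1 - i) * (4 * k + i')) * sh j.
Proof.
  intros Hij [Hx _]. unfold Phi; cbn [fst].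
  rewrite (sh_lt i j), Hx, mult_IZR, plus_IZR, mult_IZR by exact Hij. field.
Qed.

Lemma Phi_snd_grid i j p : (i < j)%Z ->
  snd (Phi L i p) = IZR ((3 * Z.of_nat L) ^ (j - 1 - i)) * (mv L * snd p) * sv L j.
Proof. intros Hij. unfold Phi; cbn [snd]. rewrite (sv_lt i j) by exact Hij. ring. Qed.

Lemma Phi_vshift i j p (d : Z) : (i < j)%Z ->
  Phi L i (fst p, snd p + IZR d / mv L)
  = vshift L j ((3 * Z.of_nat L) ^ (j - 1 - i) * d) (Phi L i p).
Proof.
  intros Hij. pose proof (mv_pos L HL). apply pt_eq; [reflexivity|].
  unfold vshift; cbn [fst snd]. rewrite !(Phi_snd_grid i j) by exact Hij. cbn [snd].
  rewrite mult_IZR. field. lra.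
Qed.

Lemma vslide_refl j p : vslide L j p p.
Proof. split; [exists 0%Z; symmetry; apply vshift_0 | left; reflexivity]. Qed.

Lemma Gj_vslide j p q : Gj L j p q -> vslide L j p q.
Proof.
  intros (i & Hij & p0 & q0 & HR & -> & ->).
  destruct (Rel_same_block L HL _ _ HR) as [<- | (k & l & i' & _ & Hp & Hq & d & Hd)].
  { apply vslide_refl. }
  pose proof (a_block_snd_shift L HL k l i' p0 q0 d Hp Hq Hd) as Eq.
  split.
  - exists ((3 * Z.of_nat L) ^ (j - 1 - i) * d)%Z. rewrite Eq. apply Phi_vshift, Hij.
  - right. eexists. apply (Phi_a_block_fst i j k l i'); eauto.
Qed.

Lemma Rj_vslide j p q : Rj L j p q -> vslide L j p q.
Proof.
  induction 1 as [p q H | p | p q _ IH | p q r _ IH1 _ IH2].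
  - apply Gj_vslide, H.
  - apply vslide_refl.
  - destruct IH as ((B & ->) & Ho). split.
    + exists (- B)%Z. rewrite vshift_add, Z.add_opp_diag_r, vshift_0. reflexivity.
    + destruct Ho as [-> | Ha]; [left; reflexivity | right; exact Ha].
  - destruct IH1 as ((B & ->) & Ho), IH2 as ((B' & ->) & Ho'). split.
    + exists (B + B')%Z. apply vshift_add.
    + destruct Ho as [E | Ha]; [rewrite E in Ho' |- *; exact Ho' | right; exact Ha].
Qed.

End Slides.

Lemma x_cond_off_coarse j k i : (1 <= i <= 3)%Z -> x_cond j (IZR (4 * k + i) * sh j).
Proof.
  intros Hi. split; [exists (4 * k + i)%Z; reflexivity|].
  intros (b & Hb). rewrite sh_pred in Hb. pose proof (sh_pos j).
  assert (E : IZR (4 * k + i) = IZR (4 * b)).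
  { rewrite mult_IZR. apply Rmult_eq_reg_r with (sh j); lra. }
  apply eq_IZR in E. lia.
Qed.

Section ShortPaths.

Variable L : nat.
Hypothesis HL : (1 <= L)%nat.

Lemma on_vpath_two_edges j a c p (Y : R) :
  fst p = IZR a * sh j -> snd p = Y * sv L j -> IZR c <= Y <= IZR c + 2 ->
  on_vpath L j a (fun n => (c + Z.of_nat n)%Z) 2 p.
Proof.
  intros Hx Hy HY. pose proof (sv_pos L HL j). right.
  destruct (Rle_lt_dec Y (IZR c + 1)) as [Hlow | Hhigh].
  - exists 0%nat. split; [lia|]. unfold in_cell; cbn [ck ca cb].
    replace (Z.min (c + Z.of_nat 0) (c + Z.of_nat 1)) with c by lia.
    rewrite Hy. split; [exact Hx | nra].
  - exists 1%nat. split; [lia|]. unfold in_cell; cbn [ck ca cb].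
    replace (Z.min (c + Z.of_nat 1) (c + Z.of_nat 2)) with (c + 1)%Z by lia.
    rewrite Hy, plus_IZR. split; [exact Hx | nra].
Qed.

Lemma PhiRel_pred_short_vpath j p q : PhiRel L (j - 1) p q -> p <> q ->
  x_cond j (fst p) /\
  exists (a : Z) (f : nat -> Z) (n : nat), (n <= 2)%nat /\ vpath f n /\
    on_vpath L j a f n p /\ on_vpath L j a f n q.
Proof.
  intros (p0 & q0 & HR & -> & ->) Hne.
  destruct (Rel_same_block L HL _ _ HR) as [<- | (k & l & i & Hi & Hp & Hq & _)];
    [contradiction|].
  assert (Hfst : forall r, a_block L k l i r -> fst (Phi L (j - 1) r) = IZR (4 * k + i) * sh j).
  { intros r [Hx _]. unfold Phi; cbn [fst]. rewrite sh_pred, Hx, plus_IZR, mult_IZR. field. }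
  assert (Hon : forall r, a_block L k l i r ->
    on_vpath L j (4 * k + i) (fun n => (3 * l + i - 1 + Z.of_nat n)%Z) 2 (Phi L (j - 1) r)).
  { intros r Hr. apply on_vpath_two_edges with (mv L * snd r); [apply Hfst, Hr| |apply Hr].
    unfold Phi; cbn [snd]. rewrite sv_pred by exact HL. ring. }
  split; [rewrite Hfst by exact Hp; apply x_cond_off_coarse, Hi|].
  exists (4 * k + i)%Z, (fun n => (3 * l + i - 1 + Z.of_nat n)%Z), 2%nat.
  split; [lia|]. split; [intros n _; lia|]. split; apply Hon; assumption.
Qed.

End ShortPaths.

Lemma clos_rst_mono {A : Type} (R S : relation A) : inclusion A R S ->
  inclusion A (clos_refl_sym_trans A R) (clos_refl_sym_trans A S).
Proof.
  intros HRS x y H. induction H; eauto using rst_step, rst_refl, rst_sym, rst_trans.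
Qed.

Section Quotients.

Variables (L : nat) (j : Z).

Lemma Rj_succ p q : Rj L j p q -> Rj L (j + 1) p q.
Proof.
  apply clos_rst_mono. intros x y (i & Hi & H). exists i. split; [lia | exact H].
Qed.

Lemma pihat_eq_iff j' p q : pihat L j' p = pihat L j' q <-> Rj L j' p q.
Proof.
  split.
  - intros E. assert (H : pihat L j' q q) by apply rst_refl.
    rewrite <- E in H. exact H.
  - intros H. apply functional_extensionality. intros r. apply propositional_extensionality.
    unfold pihat. split; intros H'; eapply rst_trans; eauto using rst_sym.
Qed.

Lemma pi_pihat p : pi L j (pihat L j p) = pihat L (j + 1) p.
Proof.
  apply functional_extensionality. intros r. apply propositional_extensionality.
  unfold pi, pihat. split.
  - intros (p' & H1 & H2). eapply rst_trans; [apply Rj_succ, H1 | exact H2].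
  - intros H. exists p. split; [apply rst_refl | exact H].
Qed.

Lemma Rbar_pi_eq x y : Rbar L j x y -> pi L j x = pi L j y.
Proof.
  induction 1 as [x y (p & q & HR & -> & ->) | | | ]; [|congruence..].
  rewrite !pi_pihat. apply pihat_eq_iff, rst_step. exists j. split; [lia|].
  exists p, q. auto.
Qed.

Lemma Rj_succ_Rbar p q : Rj L (j + 1) p q -> Rbar L j (pihat L j p) (pihat L j q).
Proof.
  induction 1 as [p q (i & Hi & HR) | p | p q _ IH | p q r _ IH1 _ IH2].
  - destruct (Z.eq_dec i j) as [-> | Hne].
    + destruct HR as (p0 & q0 & HR & -> & ->). apply rst_step. exists p0, q0. auto.
    + replace (pihat L j q) with (pihat L j p); [apply rst_refl|].
      apply pihat_eq_iff, rst_step. exists i. split; [lia | exact HR].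
  - apply rst_refl.
  - apply rst_sym, IH.
  - eapply rst_trans; eauto.
Qed.

Lemma Rbar_iff_pi_eq p q :
  Rbar L j (pihat L j p) (pihat L j q) <-> pi L j (pihat L j p) = pi L j (pihat L j q).
Proof.
  split; [apply Rbar_pi_eq|].
  rewrite !pi_pihat. intros E. apply Rj_succ_Rbar, pihat_eq_iff, E.
Qed.

End Quotients.

Definition interior_coord (flat : bool) (a : Z) (u x : R) : Prop :=
  if flat then x = IZR a * u else IZR a * u < x < (IZR a + 1) * u.

Definition xflat (k : ckind) : bool := match k with C0 | CV => true | _ => false end.
Definition yflat (k : ckind) : bool := match k with C0 | CH => true | _ => false end.

Lemma in_cell_interior_coords L j s p : in_cell_interior L j s p <->
  interior_coord (xflat (ck s)) (ca s) (sh j) (fst p) /\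
  interior_coord (yflat (ck s)) (cb s) (sv L j) (snd p).
Proof. destruct s as [[] a b]; reflexivity. Qed.

Lemma interior_coord_unique u e e' a a' x : 0 < u ->
  interior_coord e a u x -> interior_coord e' a' u x -> e = e' /\ a = a'.
Proof.
  intros Hu. assert (Hlt : forall c c', IZR c * u < (IZR c' + 1) * u -> (c <= c')%Z).
  { intros c c' H. rewrite <- plus_IZR in H. pose proof (IZR_pos_lt_mult u _ _ Hu H). lia. }
  destruct e, e'; cbn; intros H H'.
  - split; [reflexivity|]. apply eq_IZR, Rmult_eq_reg_r with u; lra.
  - assert (a <= a')%Z by (apply Hlt; lra).
    assert (a' < a)%Z by (apply IZR_pos_lt_mult with u; lra). lia.
  - assert (a' <= a)%Z by (apply Hlt; lra).
    assert (a < a')%Z by (apply IZR_pos_lt_mult with u; lra). lia.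
  - split; [reflexivity|].
    assert (a <= a')%Z by (apply Hlt; lra). assert (a' <= a)%Z by (apply Hlt; lra). lia.
Qed.

Lemma cell_interior_unique L (HL : (1 <= L)%nat) j s s' p :
  in_cell_interior L j s p -> in_cell_interior L j s' p -> s = s'.
Proof.
  rewrite !in_cell_interior_coords. intros [Hx Hy] [Hx' Hy'].
  destruct (interior_coord_unique _ _ _ _ _ _ (sh_pos j) Hx Hx') as [Ex Ea].
  destruct (interior_coord_unique _ _ _ _ _ _ (sv_pos L HL j) Hy Hy') as [Ey Eb].
  destruct s as [k a b], s' as [k' a' b']; cbn in *; subst.
  destruct k, k'; easy.
Qed.

Definition shift_cell (s : cell) (B : Z) : cell := mkCell (ck s) (ca s) (cb s + B).

Lemma translate_vshift L j B p : translate (IZR 0 * sh j, IZR B * sv L j) p = vshift L j B p.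
Proof. apply pt_eq; cbn; ring. Qed.

Lemma in_cell_interior_vshift L j s B p : in_cell_interior L j s p ->
  in_cell_interior L j (shift_cell s B) (vshift L j B p).
Proof.
  destruct s as [k a b]; unfold in_cell_interior, shift_cell, vshift; cbn.
  rewrite plus_IZR. destruct k; lra.
Qed.

Lemma in_cell_shift_cell L j s B q : in_cell L j (shift_cell s B) q <->
  exists q0, in_cell L j s q0 /\ q = vshift L j B q0.
Proof.
  destruct s as [k a b]; unfold in_cell, shift_cell, vshift; cbn [ck ca cb fst snd].
  rewrite plus_IZR. split.
  - intros H. exists (fst q, snd q - IZR B * sv L j). cbn [fst snd]. split.
    + destruct k; lra.
    + apply pt_eq; cbn [fst snd]; ring.
  - intros (q0 & H & ->). cbn [fst snd]. destruct k; lra.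
Qed.

Definition slides_with (L : nat) (j : Z) (s : cell) (B : Z) : Prop :=
  forall r, in_cell L j s r -> Rj L j r (vshift L j B r).

Lemma slides_with_0 L j s : slides_with L j s 0.
Proof. intros r _. rewrite vshift_0. apply rst_refl. Qed.

(* Y ranges over a grid edge [b/N, (b+1)/N]; since N (c+1) is an integer, that edge lies in one
   half of the block [c, c+2], which forces d into {0, 1} or {-1, 0}. *)
Lemma grid_edge_in_block (N b c d : Z) (Y0 Y : R) : (1 <= N)%Z ->
  IZR b < IZR N * Y0 < IZR b + 1 ->
  IZR c <= Y0 <= IZR c + 2 -> IZR c <= Y0 + IZR d <= IZR c + 2 ->
  IZR b <= IZR N * Y <= IZR b + 1 ->
  IZR c <= Y <= IZR c + 2 /\ IZR c <= Y + IZR d <= IZR c + 2.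
Proof.
  intros HN1 HY0 Hc Hd HY. apply IZR_le in HN1.
  assert (Hlo : (N * c <= b)%Z).
  { cut (N * c < b + 1)%Z; [lia|]. apply lt_IZR. rewrite mult_IZR, plus_IZR. nra. }
  assert (Hhi : (b + 1 <= N * (c + 2))%Z).
  { cut (b < N * (c + 2))%Z; [lia|]. apply lt_IZR. rewrite mult_IZR, plus_IZR. nra. }
  destruct (Z_le_gt_dec (b + 1) (N * (c + 1))) as [Hmid | Hmid].
  - apply IZR_le in Hlo, Hmid. rewrite !mult_IZR, !plus_IZR in *.
    assert (Y0 < IZR c + 1) by nra. assert (IZR c < Y0) by nra.
    assert (Y <= IZR c + 1) by nra. assert (IZR c <= Y) by nra.
    assert (-1 < IZR d < 2) as [Hd1 Hd2] by lra. apply lt_IZR in Hd1, Hd2.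
    assert (0 <= IZR d <= 1) by (split; apply IZR_le; lia). lra.
  - assert (Hmid' : (N * (c + 1) <= b)%Z) by lia.
    apply IZR_le in Hhi, Hmid'. rewrite !mult_IZR, !plus_IZR in *.
    assert (IZR c + 1 < Y0) by nra. assert (Y0 < IZR c + 2) by nra.
    assert (IZR c + 1 <= Y) by nra. assert (Y <= IZR c + 2) by nra.
    assert (-2 < IZR d < 1) as [Hd1 Hd2] by lra. apply lt_IZR in Hd1, Hd2.
    assert (-1 <= IZR d <= 0) by (split; apply IZR_le; lia). lra.
Qed.

Section Edges.

Variable L : nat.
Hypothesis HL : (1 <= L)%nat.

Lemma Gj_slides_vertical_edge j p p' a b :
  Gj L j p p' -> in_cell_interior L j (mkCell CV a b) p ->
  exists B, p' = vshift L j B p /\ slides_with L j (mkCell CV a b) B.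
Proof.
  intros (i & Hij & p0 & q0 & HR & -> & ->) [Hxa Hyb]. cbn [ca cb] in Hxa, Hyb.
  destruct (Rel_same_block L HL _ _ HR) as [<- | (k & l & i' & Hi & Hp & Hq & d & Hd)].
  { exists 0%Z. split; [symmetry; apply vshift_0 | apply slides_with_0]. }
  rewrite (a_block_snd_shift L HL k l i' p0 q0 d Hp Hq Hd) in Hq |- *.
  set (N := ((3 * Z.of_nat L) ^ (j - 1 - i))%Z).
  assert (HN : (1 <= N)%Z) by (cut (0 < N)%Z; [lia | apply Z.pow_pos_nonneg; lia]).
  pose proof (sv_pos L HL j). pose proof (sv_pos L HL i).
  exists (N * d)%Z. split; [apply (Phi_vshift L HL), Hij|].
  unfold slides_with. intros r [Hra Hrb]. cbn [ca cb] in Hra, Hrb.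
  set (r0 := (fst p0, snd r / sv L i)).
  assert (Er : Phi L i r0 = r).
  { apply pt_eq; [exact (eq_trans Hxa (eq_sym Hra))|]. unfold Phi, r0; cbn. field. lra. }
  rewrite (Phi_snd_grid L HL i j) in Hyb by exact Hij. fold N in Hyb.
  assert (Hp0 : IZR b < IZR N * (mv L * snd p0) < IZR b + 1).
  { split; apply Rmult_lt_reg_r with (sv L j); lra. }
  assert (Hr0 : IZR b <= IZR N * (mv L * snd r0) <= IZR b + 1).
  { rewrite <- Er, (Phi_snd_grid L HL i j) in Hrb by exact Hij. fold N in Hrb.
    split; apply Rmult_le_reg_r with (sv L j); lra. }
  destruct (grid_edge_in_block N b (3 * l + i' - 1) d (mv L * snd p0) (mv L * snd r0))
    as [Hc0 Hc1]; try solve [apply Hp | exact HN | exact Hp0 | exact Hr0].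
  { destruct Hq as [_ Hq]. cbn [snd] in Hq. rewrite mv_mul_shift in Hq by exact HL. exact Hq. }
  rewrite <- Er. unfold N. rewrite <- (Phi_vshift L HL) by exact Hij.
  apply rst_step. exists i. split; [exact Hij|]. exists r0, (fst r0, snd r0 + IZR d / mv L).
  split; [|split; reflexivity].
  apply same_block_Rel; [exact HL|]. exists k, l, i'. split; [exact Hi|].
  destruct Hp as [Hx _]. unfold a_block; cbn [fst snd]. rewrite !mv_mul_shift by exact HL.
  split; [split; assumption|]. split; [split; assumption|]. exists d. reflexivity.
Qed.

Lemma Rj_slides_vertical_edge j p q a b :
  Rj L j p q -> in_cell_interior L j (mkCell CV a b) p ->
  exists B, q = vshift L j B p /\ slides_with L j (mkCell CV a b) B.
Proof.
  intros H. apply clos_rst_rst1n in H. revert a b.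
  induction H as [x | x y z Hxy _ IH]; intros a b Hint.
  - exists 0%Z. split; [symmetry; apply vshift_0 | apply slides_with_0].
  - assert (Hg : Gj L j x y) by (destruct Hxy; [assumption | apply Gj_sym; assumption]).
    destruct (Gj_slides_vertical_edge j x y a b Hg Hint) as (B1 & -> & Hs1).
    destruct (IH a (b + B1)%Z (in_cell_interior_vshift L j _ B1 x Hint)) as (B2 & -> & Hs2).
    exists (B1 + B2)%Z. split; [apply vshift_add|].
    intros r Hr. eapply rst_trans; [apply Hs1, Hr|]. rewrite <- vshift_add.
    apply Hs2, (in_cell_shift_cell L j (mkCell CV a b) B1). exists r. auto.
Qed.

Lemma Rj_interior_off_grid j s p q :
  in_cell_interior L j s p -> xflat (ck s) = false -> Rj L j p q -> q = p.
Proof.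
  intros Hs Hflat HR. destruct (Rj_vslide L HL j p q HR) as [_ [E | (a & Ha)]]; [exact E|].
  apply in_cell_interior_coords in Hs. rewrite Hflat in Hs.
  destruct (interior_coord_unique (sh j) false true (ca s) a (fst p) (sh_pos j))
    as [? _]; [apply Hs | exact Ha | discriminate].
Qed.

Lemma Rj_cell_slide j s0 s1 p0 p1 :
  in_cell_interior L j s0 p0 -> in_cell_interior L j s1 p1 -> Rj L j p0 p1 ->
  exists B, s1 = shift_cell s0 B /\ slides_with L j s0 B.
Proof.
  intros H0 H1 HR.
  assert (K : exists B, p1 = vshift L j B p0 /\ slides_with L j s0 B).
  { destruct s0 as [[] a b].
    - destruct (Rj_vslide L HL j p0 p1 HR) as [(B & E) _]. exists B. split; [exact E|].
      intros r Hr. replace r with p0 by (destruct H0, Hr; apply pt_eq; congruence).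
      rewrite <- E. exact HR.
    - exists 0%Z. rewrite vshift_0.
      split; [eapply Rj_interior_off_grid; eauto | apply slides_with_0].
    - eapply Rj_slides_vertical_edge; eauto.
    - exists 0%Z. rewrite vshift_0.
      split; [eapply Rj_interior_off_grid; eauto | apply slides_with_0]. }
  destruct K as (B & E & Hs). exists B. split; [|exact Hs].
  apply (cell_interior_unique L HL j s1 (shift_cell s0 B) p1 H1).
  rewrite E. apply in_cell_interior_vshift, H0.
Qed.

End Edges.

Theorem mainTheorem2 (L : nat) (HL : (100 <= L)%nat) (j : Z) :
  (* (1) *)
  (forall p q : pt, PhiRel L (j - 1) p q -> p <> q ->
     x_cond j (fst p) /\
     exists (a : Z) (f : nat -> Z) (n : nat), (n <= 2)%nat /\ vpath f n /\
       on_vpath L j a f n p /\ on_vpath L j a f n q) /\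
  (* (2) *)
  (forall p q : pt, Rj L j p q ->
     exists a b : Z, q = translate (IZR a * sh j, IZR b * sv L j) p) /\
  (* (3) *)
  (forall p q : pt,
     Rbar L j (pihat L j p) (pihat L j q) <->
     pi L j (pihat L j p) = pi L j (pihat L j q)) /\
  (* (4) *)
  (forall (s0 s1 : cell) (p0 p1 : pt),
     in_cell_interior L j s0 p0 -> in_cell_interior L j s1 p1 ->
     Rj L j p0 p1 ->
     exists a b : Z,
       let t := (IZR a * sh j, IZR b * sv L j) in
       (forall q, in_cell L j s1 q <-> exists q0, in_cell L j s0 q0 /\ q = translate t q0) /\
       (forall q, in_cell L j s0 q -> Rj L j q (translate t q))).
Proof.
  assert (HL1 : (1 <= L)%nat) by lia.
  split; [apply PhiRel_pred_short_vpath, HL1|]. split; [|split].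
  - intros p q HR. destruct (Rj_vslide L HL1 j p q HR) as [(B & ->) _].
    exists 0%Z, B. symmetry. apply translate_vshift.
  - apply Rbar_iff_pi_eq.
  - intros s0 s1 p0 p1 H0 H1 HR.
    destruct (Rj_cell_slide L HL1 j s0 s1 p0 p1 H0 H1 HR) as (B & -> & Hs).
    exists 0%Z, B. cbv zeta. setoid_rewrite translate_vshift. split.
    + apply in_cell_shift_cell.
    + exact Hs.
Qed.
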